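(* Let $\rho>0$, $n\in\mathbb{Z}_+$, $t\ge 0$ and $p\in[0,1]$. For the ancestral chain started at $(a(0),b(0),c(0))=(n,0,1)$ with $s(0)=0$, $\mathbb{E}_{n,0,1,0}[p^{a(t)}\mid s(t)=0]=\tilde\nu_{n,0,1}(t)$, where $\tilde\nu_{n,0,1}(t)$ is $\nu_{n,0,1}(t)$ with $q=g=1$ and $\rho=0$ substituted.
   Context: The ancestral chain $(a(t),b(t),c(t))$ with parameter $\rho$ is the continuous-time Markov chain on $\mathbb{Z}_+^3\setminus\{\mathbf 0\}$ which from $(a,b,c)$ jumps to $(a+1,b+1,c-1)$ at rate $c\rho/2$ (a recombination event), to $(a-1,b-1,c+1)$ at rate $ab$, to $(a-1,b,c)$ at rate $ac+a(a-1)/2$, to $(a,b-1,c)$ at rate $bc+b(b-1)/2$, and to $(a,b,c-1)$ at rate $c(c-1)/2$; $s(t)$ counts recombination jumps in $(0,t)$. $\nu_{l,m,n}(t)=\mathbb{E}_{l,m,n}[p^{a(t)}q^{b(t)}g^{c(t)}]$ (equivalently, by moment duality, $\mathbb{E}_{p,q,g}[x(t)^ly(t)^mx_1(t)^n]$ for the two-locus two-allele Wright–Fisher diffusion with recombination parameter $\rho$ and initial allele frequencies $p,q$ and initial $A_1B_1$ gamete frequency $g$); it is a polynomial in $(p,q,g)$ whose coefficients depend on $\rho$ and $t$, and $\tilde\nu_{n,0,1}(t)$ is this polynomial evaluated at $q=g=1$, $\rho=0$. *)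

From HB Require Import structures.
From mathcomp Require Import all_boot all_order all_algebra.
From mathcomp Require Import all_classical all_reals all_analysis.
Set Implicit Arguments. Unset Strict Implicit. Unset Printing Implicit Defensive.
Import Order.TTheory GRing.Theory Num.Theory numFieldNormedType.Exports.
Local Open Scope ring_scope.

(* Augmented state (a, b, c, f) of the ancestral chain: f = true iff at least
   one recombination event has happened, i.e. f(t) = (s(t) > 0).
   The pair (a(t),b(t),c(t), s(t)>0) is itself a continuous-time Markov chain. *)
Definition state := (nat * nat * nat * bool)%type.

Definition moves {R : realType} (rho : R) (x : state) : seq (state * R) :=
  let: (a, b, c, f) := x in
  [:: ((a.+1, b.+1, c.-1, true), c%:R * rho / 2);
      ((a.-1, b.-1, c.+1, f), (a * b)%:R);
      ((a.-1, b, c, f), (a * c)%:R + (a * (a - 1))%:R / 2);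
      ((a, b.-1, c, f), (b * c)%:R + (b * (b - 1))%:R / 2);
      ((a, b, c.-1, f), (c * (c - 1))%:R / 2)].

Definition gen {R : realType} (rho : R) (x y : state) : R :=
  \sum_(m <- moves rho x | m.1 == y) m.2
  - (if x == y then \sum_(m <- moves rho x) m.2 else 0).

Definition box (A B C : nat) : seq state :=
  flatten [seq flatten [seq flatten [seq [:: (a, b, c, false); (a, b, c, true)]
                                    | c <- iota 0 C.+1]
                         | b <- iota 0 B.+1]
          | a <- iota 0 A.+1].

(* Box associated with the initial configuration (l,m,k): it contains the set
   {a + c <= l + k, b + c <= m + k} (x flag), which contains (l,m,k,_) and
   is closed under the dynamics (recombination and a-b coalescence preserve
   a+c and b+c, the other jumps decrease them). *)
Definition boxof (l m k : nat) : seq state := box (l + k) (m + k) (l + k).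

(* k-th power of the generator, with sums over a finite set of states S
   (exact for rows x in a closed subset of S). *)
Fixpoint genpow {R : realType} (S : seq state) (rho : R) (k : nat) (x y : state) : R :=
  match k with
  | 0 => (x == y)%:R
  | k'.+1 => \sum_(z <- S) gen rho x z * genpow S rho k' z y
  end.

Definition trans {R : realType} (S : seq state) (rho t : R) (x y : state) : R :=
  limn (series (fun k => t ^+ k / (k`!)%:R * genpow S rho k x y)).

Definition a_of (x : state) : nat := x.1.1.1.
Definition b_of (x : state) : nat := x.1.1.2.
Definition c_of (x : state) : nat := x.1.2.
Definition recombined (x : state) : bool := x.2.

Definition E_s0 {R : realType} (l m k : nat) (rho t p : R) : R :=
  \sum_(y <- boxof l m k | ~~ recombined y)
     trans (boxof l m k) rho t (l, m, k, false) y * p ^+ a_of y.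

Definition P_s0 {R : realType} (l m k : nat) (rho t : R) : R :=
  \sum_(y <- boxof l m k | ~~ recombined y)
     trans (boxof l m k) rho t (l, m, k, false) y.

Definition condE_s0 {R : realType} (l m k : nat) (rho t p : R) : R :=
  E_s0 l m k rho t p / P_s0 l m k rho t.

Definition nu {R : realType} (l m k : nat) (rho t p q g : R) : R :=
  \sum_(y <- boxof l m k)
     trans (boxof l m k) rho t (l, m, k, false) y
       * p ^+ a_of y * q ^+ b_of y * g ^+ c_of y.

Definition nu_tilde {R : realType} (l m k : nat) (t p : R) : R :=
  nu l m k 0 t p 1 1.

From HB Require Import structures.
From mathcomp Require Import all_boot all_order all_algebra.
From mathcomp Require Import all_classical all_reals all_analysis.
From mathcomp Require Import ring zify.
Import Order.TTheory GRing.Theory Num.Theory numFieldNormedType.Exports.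
Local Open Scope classical_set_scope.
Local Open Scope ring_scope.

(* Before the first recombination, the chain started at (n,0,1) moves inside
   {(a,0,1) : a <= n}: the only jumps are a -> a-1 at rate
   mu a = a + a(a-1)/2 and the recombination, at rate rho/2, which can never
   be undone.  Hence on functions that vanish once recombination has occurred
   the generator acts as L - rho/2, where L is the generator of the pure-death
   process with rates mu.  Therefore E[p^a(t); s(t) = 0] = e^{-rho t/2} E^0[p^a(t)]
   and P(s(t) = 0) = e^{-rho t/2}.  The exponential series of L is summed
   explicitly through the eigen-expansion of the bidiagonal matrix L, whose
   eigenvalues -mu a are pairwise distinct. *)

Section Series.
Variable R : realType.

Lemma ler_sum_mem (I : eqType) (r : seq I) (F : I -> R) (x : I) :
  x \in r -> (forall i, 0 <= F i) -> F x <= \sum_(i <- r) F i.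
Proof.
elim: r => [//|i r IH]; rewrite in_cons big_cons => /orP[/eqP->|xr] F0.
  by rewrite lerDl sumr_ge0.
by rewrite (le_trans (IH xr F0)) // lerDr.
Qed.

Lemma cvg_sum (I : Type) (r : seq I) (u : I -> nat -> R) (l : I -> R) :
  (forall i, u i @ \oo --> l i) ->
  (fun k => \sum_(i <- r) u i k) @ \oo --> \sum_(i <- r) l i.
Proof. by move=> ul; apply: cvg_big => //; exact: add_continuous. Qed.

Lemma cvg_series_expR (c x t : R) :
  series (fun k => t ^+ k / (k`!)%:R * (c * x ^+ k)) @ \oo --> c * expR (x * t).
Proof.
have -> : series (fun k => t ^+ k / (k`!)%:R * (c * x ^+ k)) =
          (fun n => c * series (exp_coeff (x * t)) n).
  apply/funext => n; rewrite /series /= mulr_sumr; apply: eq_bigr => k _.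
  rewrite /exp_coeff /= exprMn; ring.
apply: cvgMl_tmp; exact: is_cvg_series_exp_coeff.
Qed.

Lemma is_cvg_series_expR_bounded (g : nat -> R) (K t : R) : 0 <= K ->
  (forall k, `|g k| <= K ^+ k) ->
  cvgn (series (fun k => t ^+ k / (k`!)%:R * g k)).
Proof.
move=> K0 gK; apply: normed_cvg.
apply: (@series_le_cvg _ _ (exp_coeff (`|t| * K))).
- by move=> k /=.
- by move=> k; apply: exp_coeff_ge0; rewrite mulr_ge0.
- move=> k /=; rewrite /exp_coeff /= exprMn !normrM normrX normfV normr_nat.
  by rewrite mulrAC ler_wpM2r ?invr_ge0 // ler_wpM2l ?exprn_ge0.
- exact: is_cvg_series_exp_coeff.
Qed.

End Series.

Section DeathProcess.
Context {R : realType} (mu : nat -> R).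
Hypothesis mu0 : mu 0 = 0.
Hypothesis mu_neq : forall i j, (i < j)%N -> mu i != mu j.
Variable h : nat -> R.

(* Weight of the eigenvalue [- mu i] at the state [a] in the solution of the
   backward equation of the pure-death process with rates [mu] started from
   [h]; the last weight is fixed by the initial condition at time 0. *)
Fixpoint death_coef (a i : nat) : R :=
  match a with
  | 0 => h 0 * (i == 0)%:R
  | a'.+1 =>
      if (i <= a')%N then mu a'.+1 * death_coef a' i / (mu a'.+1 - mu i)
      else h a'.+1 - \sum_(j < a'.+1) mu a'.+1 * death_coef a' j / (mu a'.+1 - mu j)
  end.

Definition death_exp (a : nat) (t : R) : R :=
  \sum_(i < a.+1) death_coef a i * expR (- mu i * t).

Lemma death_recurrence_expansion (s : R) (H : nat -> nat -> R) (n : nat) :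
  (forall a, (a <= n)%N -> H 0%N a = h a) ->
  (forall k a, (a <= n)%N -> H k.+1 a = mu a * (H k a.-1 - H k a) - s * H k a) ->
  forall a, (a <= n)%N -> forall k,
    H k a = \sum_(i < a.+1) death_coef a i * (- (s + mu i)) ^+ k.
Proof.
move=> H0 HS; elim=> [|a IHa] an k.
  rewrite big_ord1 /= mu0 addr0 mulr1; elim: k => [|k IHk].
    by rewrite H0 // expr0 mulr1.
  by rewrite HS // IHk exprS subrr; ring.
have IH := IHa (ltnW an).
have coef_lt (i : 'I_a.+1) :
    death_coef a.+1 i = mu a.+1 * death_coef a i / (mu a.+1 - mu i).
  by rewrite /= -ltnS ltn_ord.
elim: k => [|k IHk].
  rewrite H0 // big_ord_recr /= ltnn.
  under eq_bigr => i _ do rewrite -ltnS ltn_ord expr0 mulr1.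
  by rewrite expr0 mulr1 addrC subrK.
rewrite HS // IHk /= IH ![\sum_(i < a.+2) _]big_ord_recr /= ltnn.
(* Each eigencomponent solves the recurrence because
   (mu (a+1) - mu i) * death_coef (a+1) i = mu (a+1) * death_coef a i. *)
have eigen (i : 'I_a.+1) :
  death_coef a.+1 i * (- (s + mu i)) ^+ k.+1 =
  mu a.+1 * (death_coef a i * (- (s + mu i)) ^+ k -
             death_coef a.+1 i * (- (s + mu i)) ^+ k)
  - s * (death_coef a.+1 i * (- (s + mu i)) ^+ k).
  have mu_ai : mu a.+1 - mu i != 0 by rewrite subr_eq0 eq_sym mu_neq.
  by rewrite coef_lt exprS; field.
rewrite (eq_bigr _ (fun i _ => eigen i)) sumrB -!mulr_sumr sumrB exprS; ring.
Qed.

Lemma cvg_death_series (s t : R) (H : nat -> nat -> R) (n : nat) :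
  (forall a, (a <= n)%N -> H 0%N a = h a) ->
  (forall k a, (a <= n)%N -> H k.+1 a = mu a * (H k a.-1 - H k a) - s * H k a) ->
  series (fun k => t ^+ k / (k`!)%:R * H k n) @ \oo -->
    expR (- s * t) * death_exp n t.
Proof.
move=> H0 HS; have Hn := @death_recurrence_expansion s H n H0 HS n (leqnn n).
rewrite /death_exp mulr_sumr.
under eq_bigr do rewrite mulrCA -expRD -mulrDl -opprD.
have -> : series (fun k => t ^+ k / (k`!)%:R * H k n) =
    (fun m => \sum_(i < n.+1)
       series (fun k => t ^+ k / (k`!)%:R * (death_coef n i * (- (s + mu i)) ^+ k)) m).
  apply/funext => m; rewrite /series /= -exchange_big /=.
  by apply: eq_bigr => k _; rewrite Hn mulr_sumr.
by apply: cvg_sum => i; exact: cvg_series_expR.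
Qed.

Lemma death_coef_cst : (forall a, h a = 1) -> forall a i, death_coef a i = (i == 0)%:R.
Proof.
move=> h1; elim=> [|a IH] i /=; first by rewrite h1 mul1r.
have mu_a0 : mu a.+1 != 0 by rewrite -mu0 eq_sym mu_neq.
case: ifP => [_|/negbT]; rewrite ?h1 ?IH.
  case: eqP => [->|_]; last by rewrite mulr0 mul0r.
  by rewrite mu0 subr0 /= mulr1 divff.
rewrite -ltnNge => ai; rewrite (bigD1 ord0) //= big1 => [|j /negPf j0].
  by rewrite IH /= mu0 subr0 mulr1 divff // addr0 subrr; case: i ai.
by rewrite IH (_ : (j == 0 :> nat) = false) ?mulr0 ?mul0r.
Qed.

Lemma death_exp_cst : (forall a, h a = 1) -> forall a t, death_exp a t = 1.
Proof.
move=> h1 a t; rewrite /death_exp big_ord_recl death_coef_cst // mu0 mul1r.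
rewrite big1 => [|i _]; first by rewrite oppr0 mul0r expR0 addr0.
by rewrite death_coef_cst //= mul0r.
Qed.

End DeathProcess.

Section AncestralChain.
Variable R : realType.

Lemma sum_iota_pick (N j : nat) (F : nat -> R) : (j < N)%N ->
  (forall i, i != j -> F i = 0) -> \sum_(i <- iota 0 N) F i = F j.
Proof.
move=> jN F0; rewrite (bigD1_seq j) ?mem_iota ?iota_uniq //=.
by rewrite big1 ?addr0 // => i /F0.
Qed.

Lemma sum_box_indicator (A B C a b c : nat) (f : bool) (v : state -> R) :
  (a <= A)%N -> (b <= B)%N -> (c <= C)%N ->
  \sum_(z <- box A B C) ((a, b, c, f) == z)%:R * v z = v (a, b, c, f).
Proof.
move=> aA bB cC; rewrite /box big_flatten big_map (@sum_iota_pick _ a) ?ltnS //.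
  rewrite big_flatten big_map (@sum_iota_pick _ b) ?ltnS //.
    rewrite big_flatten big_map (@sum_iota_pick _ c) ?ltnS //.
      by rewrite !big_cons big_nil; case: f; rewrite !xpair_eqE !eqxx /=;
        rewrite ?mul1r ?mul0r ?addr0 ?add0r.
    move=> c' c'c; rewrite !big_cons big_nil !xpair_eqE [c == c']eq_sym (negbTE c'c).
    by rewrite !andbF !mul0r /= !addr0.
  move=> b' b'b; rewrite big_flatten big_map big1 // => c' _.
  rewrite !big_cons big_nil !xpair_eqE [b == b']eq_sym (negbTE b'b).
  by rewrite ?andbF ?andFb !mul0r /= !addr0.
move=> a' a'a; rewrite big_flatten big_map big1 // => b' _.
rewrite big_flatten big_map big1 // => c' _.
rewrite !big_cons big_nil !xpair_eqE [a == a']eq_sym (negbTE a'a).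
by rewrite ?andbF ?andFb !mul0r /= !addr0.
Qed.

Lemma gen_recombined (rho : R) (z z' : state) :
  recombined z -> ~~ recombined z' -> gen rho z z' = 0.
Proof.
case: z => [[[a b] c] f]; case: z' => [[[a' b'] c'] f'] /= -> /negPf ->.
by rewrite /gen /moves !big_cons big_nil /= !xpair_eqE /= !andbF /= subr0.
Qed.

Lemma genpow_recombined (S : seq state) (rho : R) k (z y : state) :
  recombined z -> ~~ recombined y -> genpow S rho k z y = 0.
Proof.
elim: k z => [|k IH] z zr yr /=.
  by case: eqP => // zy; move: yr; rewrite -zy zr.
rewrite big1 // => z' _; case: (boolP (recombined z')) => z'r.
  by rewrite IH ?mulr0.
by rewrite gen_recombined ?mul0r.
Qed.

Lemma genpow_bound (S : seq state) (rho : R) (x y : state) :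
  exists2 K, 0 <= K & forall k, `|genpow S rho k x y| <= K ^+ k.
Proof.
pose row x' := \sum_(z <- S) `|gen rho x' z|.
pose K := \sum_(x' <- x :: S) row x'.
have row_ge0 x' : 0 <= row x' by rewrite sumr_ge0.
suff bound k z : z \in x :: S -> `|genpow S rho k z y| <= K ^+ k.
  by exists K; [rewrite sumr_ge0 | move=> k; apply: bound; rewrite mem_head].
elim: k z => [|k IH] z zS /=.
  by case: eqP; rewrite ?normr1 ?normr0 expr0.
apply: (le_trans (ler_norm_sum _ _ _)).
apply: (@le_trans _ _ (row z * K ^+ k)).
  rewrite /row mulr_suml big_seq [X in _ <= X]big_seq; apply: ler_sum => z' z'S.
  by rewrite normrM ler_wpM2l // IH // inE z'S orbT.
by rewrite exprS ler_wpM2r ?exprn_ge0 ?sumr_ge0 // (@ler_sum_mem _ _ _ row _ zS).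
Qed.

Lemma cvg_trans_series (S : seq state) (rho t : R) (x y : state) :
  series (fun k => t ^+ k / (k`!)%:R * genpow S rho k x y) @ \oo -->
    trans S rho t x y.
Proof.
have [K K0 genpowK] := genpow_bound S rho x y.
exact: (@is_cvg_series_expR_bounded R _ _ t K0 genpowK).
Qed.

Definition genpowV (S : seq state) (rho : R) (V : state -> R) k (x : state) : R :=
  \sum_(y <- S) genpow S rho k x y * V y.

Lemma genpowVS (S : seq state) (rho : R) (V : state -> R) k (x : state) :
  genpowV S rho V k.+1 x = \sum_(z <- S) gen rho x z * genpowV S rho V k z.
Proof.
rewrite /genpowV /=; under eq_bigr do rewrite mulr_suml.
rewrite exchange_big /=; apply: eq_bigr => z _; rewrite mulr_sumr.
by apply: eq_bigr => y _; rewrite mulrA.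
Qed.

Lemma cvg_series_genpowV (S : seq state) (rho t : R) (V : state -> R) (x : state) :
  series (fun k => t ^+ k / (k`!)%:R * genpowV S rho V k x) @ \oo -->
    \sum_(y <- S) trans S rho t x y * V y.
Proof.
have -> : series (fun k => t ^+ k / (k`!)%:R * genpowV S rho V k x) =
  (fun m => \sum_(y <- S)
     series (fun k => t ^+ k / (k`!)%:R * genpow S rho k x y) m * V y).
  apply/funext => m; rewrite /series /genpowV /=.
  under eq_bigr do rewrite mulr_sumr.
  rewrite exchange_big /=; apply: eq_bigr => y _; rewrite mulr_suml.
  by apply: eq_bigr => k _; rewrite mulrA.
by apply: cvg_sum => y; apply: cvgMr_tmp; exact: cvg_trans_series.
Qed.

Lemma genpowV_recombined (S : seq state) (rho : R) (V : state -> R) k (z : state) :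
  (forall y, recombined y -> V y = 0) -> recombined z -> genpowV S rho V k z = 0.
Proof.
move=> V0 zr; rewrite /genpowV big1 // => y _.
case: (boolP (recombined y)) => yr; first by rewrite V0 ?mulr0.
by rewrite genpow_recombined ?mul0r.
Qed.

Lemma gen_sum_moves (S : seq state) (rho : R) (x : state) (V : state -> R) :
  \sum_(z <- S) gen rho x z * V z =
  \sum_(m <- moves rho x) m.2 * (\sum_(z <- S) (m.1 == z)%:R * V z)
  - (\sum_(m <- moves rho x) m.2) * (\sum_(z <- S) (x == z)%:R * V z).
Proof.
rewrite /gen; under eq_bigr do rewrite mulrBl.
rewrite sumrB; congr (_ - _).
  under eq_bigr do rewrite big_mkcond /= mulr_suml.
  rewrite exchange_big /=; apply: eq_bigr => m _; rewrite mulr_sumr.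
  by apply: eq_bigr => z _; case: eqP => _; rewrite ?mul1r ?mul0r ?mulr0.
rewrite mulr_sumr; apply: eq_bigr => z _.
by case: eqP => _; rewrite ?mul1r ?mul0r ?mulr0.
Qed.

Definition coal_rate (a : nat) : R := (a * 1)%:R + (a * (a - 1))%:R / 2.

Lemma coal_rate0 : coal_rate 0 = 0.
Proof. by rewrite /coal_rate !mul0n mul0r addr0. Qed.

Lemma coal_rate_neq i j : (i < j)%N -> coal_rate i != coal_rate j.
Proof.
move=> ij; rewrite lt_eqF // /coal_rate !muln1; apply: ltr_leD.
  by rewrite ltr_nat.
by rewrite ler_pM2r ?invr_gt0 ?ltr0n // ler_nat leq_mul ?leq_sub2r // ltnW.
Qed.

Lemma gen_death_step (rho : R) (n a : nat) (V : state -> R) : (a <= n)%N ->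
  (rho = 0 \/ forall z, recombined z -> V z = 0) ->
  \sum_(z <- boxof n 0 1) gen rho (a, 0, 1, false)%N z * V z =
  coal_rate a * (V (a.-1, 0, 1, false)%N - V (a, 0, 1, false)%N)
  - rho / 2 * V (a, 0, 1, false)%N.
Proof.
move=> an recV; rewrite gen_sum_moves.
have pick (x : state) (v : state -> R) :
    (a_of x <= n.+1)%N -> (b_of x <= 1)%N -> (c_of x <= n.+1)%N ->
    \sum_(z <- boxof n 0 1) (x == z)%:R * v z = v x.
  by case: x => [[[a' b'] c'] f] /= *; rewrite /boxof sum_box_indicator ?addn1.
move: (boxof n 0 1) pick => S pick.
rewrite /moves /= !big_cons !big_nil muln0 !mul0n subnn muln0 !mulr0n !mul0r.
rewrite !pick /a_of /b_of /c_of //=; try lia.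
have -> : 1 * rho / 2 * V (a.+1, 1, 0, true)%N = 0.
  by case: recV => [->|V0]; rewrite ?V0 ?mulr0 ?mul0r.
rewrite /coal_rate; ring.
Qed.

(* Seen through a function that vanishes after recombination (or with
   rho = 0), the chain from (n,0,1) is the pure-death process with rates
   [coal_rate] killed at rate rho/2. *)
Lemma sum_trans_death (rho t : R) (n : nat) (h : nat -> R) (V : state -> R) :
  (rho = 0 \/ forall z, recombined z -> V z = 0) ->
  (forall a, (a <= n)%N -> V (a, 0, 1, false)%N = h a) ->
  \sum_(y <- boxof n 0 1) trans (boxof n 0 1) rho t (n, 0, 1, false)%N y * V y =
  expR (- (rho / 2) * t) * death_exp coal_rate h n t.
Proof.
move=> recV Vh; set S := boxof n 0 1.
pose H k a := genpowV S rho V k (a, 0, 1, false)%N.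
have H0 a : (a <= n)%N -> H 0%N a = h a.
  by move=> an; rewrite /H /genpowV /S /boxof sum_box_indicator ?Vh //; lia.
have HS k a : (a <= n)%N ->
    H k.+1 a = coal_rate a * (H k a.-1 - H k a) - rho / 2 * H k a.
  move=> an; rewrite /H genpowVS gen_death_step //.
  case: recV => [|V0]; [by left | right => z; exact: genpowV_recombined].
have A := cvg_series_genpowV S rho t V (n, 0, 1, false)%N.
have B := @cvg_death_series R coal_rate coal_rate0 coal_rate_neq h (rho / 2) t H n H0 HS.
exact: (@cvg_unique R^o _ _ _ _ _ A B).
Qed.

Lemma E_s0_death (n : nat) (rho t p : R) :
  E_s0 n 0 1 rho t p =
  expR (- (rho / 2) * t) * death_exp coal_rate (fun a => p ^+ a) n t.
Proof.
rewrite -(@sum_trans_death _ _ _ _ (fun y => (~~ recombined y)%:R * p ^+ a_of y)).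
- rewrite /E_s0 big_mkcond; apply: eq_bigr => y _.
  by case: (recombined y); rewrite /= ?mulr0n ?mulr1n ?mul0r ?mulr0 ?mul1r.
- by right => -[[[a b] c] f] /= ->; rewrite mul0r.
- by move=> a _; rewrite /= mul1r.
Qed.

Lemma P_s0_death (n : nat) (rho t : R) : P_s0 n 0 1 rho t = expR (- (rho / 2) * t).
Proof.
have -> : P_s0 n 0 1 rho t = E_s0 n 0 1 rho t 1.
  by apply: eq_bigr => y _; rewrite expr1n mulr1.
rewrite E_s0_death death_exp_cst ?mulr1 //.
- exact: coal_rate0.
- exact: coal_rate_neq.
- by move=> a; rewrite expr1n.
Qed.

Lemma nu_tilde_death (n : nat) (t p : R) :
  nu_tilde n 0 1 t p = death_exp coal_rate (fun a => p ^+ a) n t.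
Proof.
rewrite /nu_tilde /nu; under eq_bigr do rewrite !expr1n !mulr1.
rewrite (@sum_trans_death _ _ _ (fun a => p ^+ a)); last by [].
  by rewrite mul0r oppr0 mul0r expR0 mul1r.
by left.
Qed.

End AncestralChain.

Theorem mainTheorem5 (R : realType) (rho : R) (n : nat) (t p : R) :
  0 < rho -> 0 <= t -> 0 <= p <= 1 ->
  condE_s0 n 0 1 rho t p = nu_tilde n 0 1 t p.
Proof.
move=> _ _ _; rewrite /condE_s0 E_s0_death P_s0_death nu_tilde_death.
by rewrite mulrC mulKf // gt_eqF // expR_gt0.
Qed.
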